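(* Let $P$ be a polyhedral map, let $B^u_P$ be the barycentric subdivision $B_P$ with the vertex colours removed, and let $S_i(B_P)$ be the set of automorphisms of $B^u_P$ that map every vertex of (former) colour 0 to a vertex of colour 2 and every vertex of colour 2 to a vertex of colour 0, and map vertices of colour 1 to vertices of colour 1. Then the elements of the group $\mathrm{Aut}(B^u_P)$ are exactly the permutations in $\mathrm{Aut}(B_P)\cup S_i(B_P)$, where $\mathrm{Aut}(B_P)$ is the group of colour-preserving automorphisms of $B_P$.
   Context: A polyhedral map is a 3-connected graph embedded in a closed orientable surface such that every face is an open disc and the closures of any two faces have connected intersection. The barycentric subdivision $B_P$ of $P$ is obtained by adding a vertex inside every face and on every edge and joining each face-vertex to all vertices and edge-vertices on that face's boundary, so that all faces are triangles; original vertices get colour 0, edge-vertices colour 1, face-vertices colour 2. Automorphisms of $B_P$ as a coloured map preserve colours. *)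

(* Maps on closed surfaces encoded combinatorially by
   flag systems (F, r_0, r_1, r_2). *)
From mathcomp Require Import all_boot.
From mathcomp Require Import perm.
Set Implicit Arguments. Unset Strict Implicit. Unset Printing Implicit Defensive.

Definition c0 : 'I_3 := @Ordinal 3 0 erefl.
Definition c1 : 'I_3 := @Ordinal 3 1 erefl.
Definition c2 : 'I_3 := @Ordinal 3 2 erefl.

Section FlagSystem.
Variables (F : finType) (r : 'I_3 -> F -> F).

Definition orbrel (i : 'I_3) : rel F :=
  fun a b => [exists j : 'I_3, (j != i) && (b == r j a)].

(* the i-element (vertex for i=0, edge for i=1, face for i=2) containing
   flag x, represented as the set of its flags *)
Definition orb (i : 'I_3) (x : F) : {set F} := [set y | connect (orbrel i) x y].

Definition orientable_map : Prop :=
  [/\ (forall i x, r i (r i x) = x) /\ (forall i x, r i x != x),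
      (forall x, r c0 (r c2 x) = r c2 (r c0 x)),
      (forall x, r c0 (r c2 x) != x),
      (forall x y, connect (fun a b => [exists j : 'I_3, b == r j a]) x y)
    & (exists s : F -> bool, forall i x, s (r i x) = ~~ s x)].

(* underlying graph: vertices = 0-orbits; edge orb c1 x joins orb c0 x and orb c0 (r c0 x) *)
Definition gvertices : {set {set F}} := [set orb c0 x | x in F].
Definition gadj : rel {set F} :=
  fun u w => [exists x, (orb c0 x == u) && (orb c0 (r c0 x) == w)].

Definition adj_avoid (S : {set {set F}}) : rel {set F} :=
  fun u w => [&& gadj u w, u \notin S & w \notin S].

(* simple 3-connected graph *)
Definition three_connected : Prop :=
  [/\ (forall x, orb c0 x != orb c0 (r c0 x)),
      (forall x y, orb c0 x = orb c0 y -> orb c0 (r c0 x) = orb c0 (r c0 y) ->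
                  orb c1 x = orb c1 y),
      4 <= #|gvertices|
    & (forall (a b u w : {set F}), u \in gvertices -> w \in gvertices ->
        u \notin [set a; b] -> w \notin [set a; b] ->
        connect (adj_avoid [set a; b]) u w)].

Definition incident (A B : {set F}) : bool := A :&: B != set0.

(* vertices and edges in the intersection of the closures of faces f and h *)
Definition common_vertices (f h : {set F}) : {set {set F}} :=
  [set v in gvertices | incident v f && incident v h].
Definition common_adj (f h : {set F}) : rel {set F} :=
  fun u w => [exists x, [&& incident (orb c1 x) f, incident (orb c1 x) h,
                           orb c0 x == u & orb c0 (r c0 x) == w]].

Definition faces_meet_connected : Prop :=
  forall x y u w, u \in common_vertices (orb c2 x) (orb c2 y) ->
    w \in common_vertices (orb c2 x) (orb c2 y) ->
    connect (common_adj (orb c2 x) (orb c2 y)) u w.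

Definition polyhedral_map : Prop :=
  [/\ orientable_map, three_connected & faces_meet_connected].

(* barycentric subdivision: vertices are (colour, element) pairs *)
Definition BVpred : pred ('I_3 * {set F}) :=
  fun v => [exists x, v.2 == orb v.1 x].
Definition BV := {v : 'I_3 * {set F} | BVpred v}.

Definition colour (v : BV) : nat := (val v).1.

(* triangle of B_P determined by a flag *)
Definition tri (x : F) : {set 'I_3 * {set F}} := [set (i, orb i x) | i : 'I_3].
Definition is_triangle (T : {set BV}) : bool := [exists x, (val @: T) == tri x].

(* automorphisms of the uncoloured map B^u_P: vertex permutations preserving triangles *)
Definition is_autU (g : {perm BV}) : Prop :=
  forall T : {set BV}, is_triangle (g @: T) = is_triangle T.

Definition is_autB (g : {perm BV}) : Prop :=
  is_autU g /\ forall v, colour (g v) = colour v.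

Definition in_Si (g : {perm BV}) : Prop :=
  [/\ is_autU g,
      (forall v, colour v = 0 -> colour (g v) = 2),
      (forall v, colour v = 2 -> colour (g v) = 0)
    & (forall v, colour v = 1 -> colour (g v) = 1)].

End FlagSystem.

From mathcomp Require Import all_boot perm.
From mathcomp Require Import zify.
Set Implicit Arguments. Unset Strict Implicit. Unset Printing Implicit Defensive.

(* An automorphism g of the uncoloured subdivision maps the triangle of each
   flag onto a triangle, so it permutes the three colours on that triangle.
   Adjacent flags share two of their three vertices, so these permutations
   agree on adjacent flags and, the flag graph being connected, g permutes the
   colour classes globally.  The permutation fixes colour 1: otherwise some
   vertex or face is sent to an edge-vertex.  That element is incident with at
   least three edges (vertices have degree at least 3 by 3-connectivity, so
   faces have at least three sides as the graph is simple), and their images are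
   pairwise distinct neighbours of a single colour of one edge-vertex; but an
   edge has only two ends and two sides. *)

Lemma ord3P (i : 'I_3) : [\/ i = c0, i = c1 | i = c2].
Proof. by case: i => [[|[|[|]]] //] ?; [apply: Or31|apply: Or32|apply: Or33]; apply: val_inj. Qed.

Lemma ord3_neq_c1 (i : 'I_3) : i != c1 -> i = c0 \/ i = c2.
Proof. by case: (ord3P i) => ->; [left|rewrite eqxx|right]. Qed.

Lemma eq_inj_off1 (T : finType) (f f' : T -> T) (j : T) :
  injective f -> injective f' -> (forall k, k != j -> f k = f' k) -> f j = f' j.
Proof.
move=> injf injf' eqf; have [h fK hK] := injF_bij injf.
pose m := h (f' j); have fm : f m = f' j by rewrite hK.
have [mj|hj] := eqVneq m j; first by rewrite -fm mj.
by move: (eqf _ hj); rewrite fm => /injf' jm; rewrite jm eqxx in hj.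
Qed.

Lemma ord3_inj_fix1 (s : 'I_3 -> 'I_3) : injective s -> s c1 = c1 ->
  s =1 id \/ forall i : 'I_3, s i = 2 - i :> nat.
Proof.
move=> injs s1.
have n0 : s c0 != c1 by rewrite -s1 (inj_eq injs).
have n2 : s c2 != c1 by rewrite -s1 (inj_eq injs).
have n02 : s c0 != s c2 by rewrite (inj_eq injs).
move: n0 n2 n02; rewrite -!(inj_eq val_inj) /= => n0 n2 n02.
have l0 := ltn_ord (s c0); have l2 := ltn_ord (s c2).
have [e0|e0] : s c0 = 0 :> nat \/ s c0 = 2 :> nat by lia.
- left=> i; apply: val_inj; case: (ord3P i) => -> //=; rewrite ?s1 //; lia.
- right=> i; case: (ord3P i) => -> //=; rewrite ?s1 //; lia.
Qed.

Lemma connect_const (T : finType) (e : rel T) (A : Type) (f : T -> A) :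
  (forall a b, e a b -> f b = f a) -> forall x y, connect e x y -> f y = f x.
Proof.
move=> fe x y /connectP[p + ->]; elim: p x => //= b p IH a /andP[eab /IH ->].
exact: fe.
Qed.

Lemma set4P (T : finType) (a b c d x : T) :
  x \in [set a; b; c; d] -> [\/ x = a, x = b, x = c | x = d].
Proof.
by rewrite !inE => /orP[/orP[/orP[]|]|] /eqP ->;
  [apply: Or41 | apply: Or42 | apply: Or43 | apply: Or44].
Qed.

Section FlagSystem.
Variables (F : finType) (r : 'I_3 -> F -> F).

Local Notation vertex := (orb r c0).
Local Notation edge := (orb r c1).

Lemma mem_orb i x : x \in orb r i x.
Proof. by rewrite inE connect0. Qed.

Lemma orb_subset i x (A : {set F}) : x \in A ->
  (forall j a, j != i -> a \in A -> r j a \in A) -> orb r i x \subset A.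
Proof.
move=> xA closedA; apply/subsetP => y; rewrite inE => /connectP[p + ->] {y}.
elim: p x xA => //= b p IH a aA /andP[/existsP[j /andP[hj /eqP eb]] hp].
by apply: IH hp; rewrite eb closedA.
Qed.

Hypothesis rK : forall i, involutive (r i).

Lemma orbrel_sym i : symmetric (orbrel r i).
Proof.
move=> a b; apply/existsP/existsP => [] [j /andP[hj /eqP ->]]; exists j;
  by rewrite hj rK eqxx.
Qed.

Lemma orb_eq_mem i x y : y \in orb r i x -> orb r i y = orb r i x.
Proof.
rewrite inE => hxy; apply/setP => z; rewrite !inE.
apply/idP/idP; first exact: connect_trans.
by apply: connect_trans; rewrite (sym_connect_sym (orbrel_sym i)).
Qed.

Lemma orb_step i j x : j != i -> orb r i (r j x) = orb r i x.
Proof.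
move=> hj; apply: orb_eq_mem; rewrite inE; apply: connect1.
by apply/existsP; exists j; rewrite hj eqxx.
Qed.

Hypothesis r02C : forall x, r c0 (r c2 x) = r c2 (r c0 x).

Lemma edge_flags x : edge x \subset [set x; r c0 x; r c2 x; r c0 (r c2 x)].
Proof.
apply: orb_subset; first by rewrite !inE eqxx.
move=> j a /ord3_neq_c1[] -> /set4P[] ->; rewrite !inE;
  by rewrite ?rK -?r02C ?rK ?r02C ?rK ?eqxx ?orbT.
Qed.

Lemma edge_flag_ends d x u : d != c1 -> u \in edge x ->
  orb r d u = orb r d x \/ orb r d u = orb r d (r d x).
Proof.
move=> /ord3_neq_c1[] -> /(subsetP (edge_flags x)) /set4P[] ->.
- by left.
- by right.
- by left; rewrite orb_step.
- by right; rewrite r02C orb_step.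
- by left.
- by left; rewrite orb_step.
- by right.
- by right; rewrite orb_step.
Qed.

Lemma edge_two_ends e u w1 w2 w3 : e != c1 ->
  w1 \in edge u -> w2 \in edge u -> w3 \in edge u ->
  [\/ orb r e w1 = orb r e w2, orb r e w1 = orb r e w3 | orb r e w2 = orb r e w3].
Proof.
move=> he /(edge_flag_ends he) [] e1 /(edge_flag_ends he) [] e2
  /(edge_flag_ends he) [] e3; rewrite e1 e2 e3;
  by [apply: Or31 | apply: Or32 | apply: Or33].
Qed.

Definition three_edges_at c z : Prop := exists y1 y2 y3,
  [/\ orb r c y1 = orb r c z, orb r c y2 = orb r c z & orb r c y3 = orb r c z] /\
  [/\ edge y1 != edge y2, edge y1 != edge y3 & edge y2 != edge y3].

Section Polyhedral.
Hypotheses (rNfix : forall i x, r i x != x)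
  (loopless : forall x, vertex x != vertex (r c0 x))
  (simple : forall x y, vertex x = vertex y -> vertex (r c0 x) = vertex (r c0 y) ->
     edge x = edge y)
  (gvertices_ge4 : 4 <= #|gvertices r|)
  (connected_avoid2 : forall a b u w : {set F}, u \in gvertices r -> w \in gvertices r ->
     u \notin [set a; b] -> w \notin [set a; b] -> connect (adj_avoid r [set a; b]) u w).

Lemma edge_neq_far_end y y' : vertex y = vertex y' ->
  vertex (r c0 y) != vertex (r c0 y') -> edge y != edge y'.
Proof.
move=> e0; apply: contraNneq => e1.
have : r c0 y' \in edge y by rewrite e1 -(orb_step (j := c0) y') ?mem_orb.
case/(edge_flag_ends (isT : c0 != c1)) => [e0'|->] //.
by move: (loopless y'); rewrite -e0 -e0' eqxx.
Qed.

Lemma vertex_nbr_avoid z a b : vertex z \notin [set a; b] ->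
  exists2 y, vertex y = vertex z & vertex (r c0 y) \notin [set a; b].
Proof.
move=> zab; set u := vertex z.
have uV : u \in gvertices r by apply: imset_f.
have /subsetPn[w wV] : ~~ (gvertices r \subset [set a; b; u]).
  apply: contraTN gvertices_ge4 => /subset_leq_card; rewrite -ltnNge !cardsU !cards1.
  lia.
rewrite !inE !negb_or => /andP[/andP[wa wb] wu].
have wab : w \notin [set a; b] by rewrite !inE negb_or wa wb.
case/connectP: (connected_avoid2 uV wV zab wab) => [[|u' p]] /=.
  by move=> _ /eqP; rewrite (negbTE wu).
case/andP=> /and3P[/existsP[x /andP[/eqP hx /eqP hx']] _ u'ab] _ _.
by exists x; rewrite // hx'.
Qed.

Lemma three_edges_at_vertex z : three_edges_at c0 z.
Proof.
set a := vertex (r c0 z).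
have [y1 h1] : exists2 y, vertex y = vertex z & vertex (r c0 y) \notin [set a; a].
  by apply: vertex_nbr_avoid; rewrite !inE orbb (negbTE (loopless z)).
rewrite !inE orbb => n1.
have [y2 h2] : exists2 y, vertex y = vertex z &
    vertex (r c0 y) \notin [set a; vertex (r c0 y1)].
  by apply: vertex_nbr_avoid; rewrite !inE negb_or (loopless z) -h1 loopless.
rewrite !inE negb_or => /andP[n2 n21].
exists z, y1, y2; split=> //; split; apply: edge_neq_far_end;
  by rewrite ?h1 ?h2 // eq_sym.
Qed.

Lemma r1_neq_r2 x : r c1 x != r c2 x.
Proof.
apply/eqP => e12.
have sub : vertex x \subset [set x; r c1 x].
  apply: orb_subset => [|j a]; first by rewrite !inE eqxx.
  by case: (ord3P j) => -> // _ /set2P[] ->;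
    rewrite !inE ?rK ?eqxx ?orbT // e12 ?rK ?eqxx ?orbT.
have edge_x y : vertex y = vertex x -> edge y = edge x.
  move=> hy; have : y \in vertex x by rewrite -hy mem_orb.
  by move=> /(subsetP sub) /set2P[] -> //; rewrite e12 orb_step.
have [y1 [y2 [_ [[h1 h2 _] [n12 _ _]]]]] := three_edges_at_vertex x.
by move: n12; rewrite (edge_x _ h1) (edge_x _ h2) eqxx.
Qed.

Lemma edge_neq_r1 x : edge x != edge (r c1 x).
Proof.
apply/eqP => E; have vx : vertex (r c1 x) = vertex x by rewrite orb_step.
have : r c1 x \in edge x by rewrite E mem_orb.
move=> /(subsetP (edge_flags x)) /set4P[] e1.
- by move: (rNfix c1 x); rewrite e1 eqxx.
- by move: (loopless x); rewrite -e1 vx eqxx.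
- by move: (r1_neq_r2 x); rewrite e1 eqxx.
- by move: (loopless x); rewrite -vx e1 r02C orb_step ?eqxx.
Qed.

Lemma three_edges_at_face y : three_edges_at c2 y.
Proof.
exists y, (r c1 y), (r c1 (r c0 (r c1 y))); split; first by split; rewrite ?orb_step.
have vy : vertex (r c1 y) = vertex y by rewrite orb_step.
split; first exact: edge_neq_r1.
- apply/eqP => E; have : r c1 (r c0 (r c1 y)) \in edge y by rewrite E mem_orb.
  case/(edge_flag_ends (isT : c0 != c1)); rewrite orb_step // => h.
    by move: (loopless (r c1 y)); rewrite h vy eqxx.
  by move: (edge_neq_r1 y); rewrite (simple vy h) eqxx.
- by rewrite -[edge (r c1 y)](orb_step (j := c0)) // edge_neq_r1.
Qed.

Lemma three_edges_at_ends c z : c != c1 -> three_edges_at c z.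
Proof.
by case/ord3_neq_c1 => ->; [apply: three_edges_at_vertex | apply: three_edges_at_face].
Qed.

End Polyhedral.

Lemma BVpred_orb i x : BVpred r (i, orb r i x).
Proof. by apply/existsP; exists x. Qed.

Definition bv i x : BV r := exist _ (i, orb r i x) (BVpred_orb i x).

Lemma bv_surj (v : BV r) : exists x, v = bv (val v).1 x.
Proof.
case: v => [[i S] hv]; case/existsP: (hv) => x /eqP /= hS.
by exists x; apply: val_inj; rewrite /= hS.
Qed.

Lemma bv_inj i j x y : bv i x = bv j y -> i = j /\ orb r i x = orb r j y.
Proof. by move/(congr1 val) => [-> ->]. Qed.

Lemma eq_bv i x y : orb r i x = orb r i y -> bv i x = bv i y.
Proof. by move=> h; apply: val_inj; rewrite /= h. Qed.

Definition triangle x : {set BV r} := [set bv i x | i : 'I_3].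

Lemma triangleP T : is_triangle T <-> exists u, T = triangle u.
Proof.
split=> [/existsP[u /eqP hT] | [u ->]]; last first.
  by apply/existsP; exists u; rewrite -imset_comp; apply/eqP/eq_imset.
by exists u; apply: (imset_inj val_inj); rewrite hT -imset_comp; apply: eq_imset.
Qed.

Lemma mem_triangle v x : v \in triangle x -> v = bv (val v).1 x.
Proof. by case/imsetP=> i _ ->. Qed.

Section Automorphism.
Variables (g : {perm BV r}) (hg : is_autU g).

Definition image_colour x i : 'I_3 := (val (g (bv i x))).1.

Lemma autU_triangle x : exists u, forall i, g (bv i x) = bv (image_colour x i) u.
Proof.
have /triangleP[u hu] : is_triangle (g @: triangle x).
  by rewrite hg; apply/triangleP; exists x.
exists u => i; apply: mem_triangle; rewrite -hu; exact/imset_f/imset_f.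
Qed.

Lemma image_colour_inj x : injective (image_colour x).
Proof.
move=> i j hij; have [u hu] := autU_triangle x.
by have /perm_inj/bv_inj[] : g (bv i x) = g (bv j x) by rewrite !hu hij.
Qed.

Lemma image_colour_step j x : image_colour (r j x) =1 image_colour x.
Proof.
have off k : k != j -> image_colour (r j x) k = image_colour x k.
  by rewrite eq_sym => hk; rewrite /image_colour (eq_bv (orb_step _ hk)).
move=> i; have [-> | /off //] := eqVneq i j.
by apply: eq_inj_off1 off; apply: image_colour_inj.
Qed.

Hypothesis r_connected :
  forall x y, connect (fun a b => [exists j : 'I_3, b == r j a]) x y.

Lemma image_colour_const x y : image_colour x =1 image_colour y.
Proof.
move=> i; apply: (connect_const (f := image_colour ^~ i)) (r_connected y x).
by move=> a b /existsP[j /eqP ->]; rewrite image_colour_step.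
Qed.

Lemma colour_autU x v : colour (g v) = image_colour x (val v).1.
Proof. by have [y {1}->] := bv_surj v; rewrite -(image_colour_const y x). Qed.

Lemma autU_triangle_const z x :
  exists u, forall i, g (bv i x) = bv (image_colour z i) u.
Proof.
have [u hu] := autU_triangle x.
by exists u => i; rewrite hu (image_colour_const x z).
Qed.

Lemma image_colour_neq_c1 c z : three_edges_at c z -> image_colour z c != c1.
Proof.
case=> [y1 [y2 [y3 [[h1 h2 h3] [n12 n13 n23]]]]]; apply/eqP => hc.
have hc1 : c != c1 by apply: contraNneq n12 => ec; rewrite -ec h1 h2.
set e := image_colour z c1.
have he : e != c1 by rewrite -hc (inj_eq (image_colour_inj (x := z))) eq_sym.
have [u1 g1] := autU_triangle_const z y1.
have [u2 g2] := autU_triangle_const z y2.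
have [u3 g3] := autU_triangle_const z y3.
have in_edge y u : orb r c y = orb r c z ->
    (forall i, g (bv i y) = bv (image_colour z i) u) -> u \in edge u1.
  move=> hy gy; move: (g1 c); rewrite (eq_bv (etrans h1 (esym hy))) gy hc.
  by case/bv_inj=> _ <-; apply: mem_orb.
have distinct y y' u u' : edge y != edge y' ->
    (forall i, g (bv i y) = bv (image_colour z i) u) ->
    (forall i, g (bv i y') = bv (image_colour z i) u') ->
    orb r e u = orb r e u' -> False.
  move=> nyy' gy gy' euu'; have : g (bv c1 y) = g (bv c1 y').
    by rewrite gy gy' (eq_bv euu').
  by case/perm_inj/bv_inj=> _ eyy'; rewrite eyy' eqxx in nyy'.
case: (edge_two_ends he (in_edge _ _ h1 g1) (in_edge _ _ h2 g2) (in_edge _ _ h3 g3)).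
- exact: distinct n12 g1 g2.
- exact: distinct n13 g1 g3.
- exact: distinct n23 g2 g3.
Qed.

Hypothesis edges_ge3 : forall c z, c != c1 -> three_edges_at c z.

Lemma autU_colour_swap :
  (forall v, colour (g v) = colour v) \/ (forall v, colour (g v) = 2 - colour v).
Proof.
have [x0 _|noF] := pickP (xpredT : pred F); last first.
  by left=> v; have [x _] := bv_surj v; have := noF x.
have [c hc] : exists c, image_colour x0 c = c1.
  by have [h _ hK] := injF_bij (image_colour_inj (x := x0)); exists (h c1).
have ec : c = c1.
  apply/eqP; apply: contraT => /(edges_ge3 x0) /image_colour_neq_c1.
  by rewrite hc eqxx.
subst c.
case: (ord3_inj_fix1 (image_colour_inj (x := x0)) hc) => s; [left | right] => v;
  by rewrite (colour_autU x0) s.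
Qed.

End Automorphism.
End FlagSystem.

Theorem corollary1 (F : finType) (r : 'I_3 -> F -> F)
  (hP : polyhedral_map r) (g : {perm BV r}) :
  is_autU g <-> (is_autB g \/ in_Si g).
Proof.
split=> [hg | [[] | []] //].
case: hP => [[[rK rNfix] r02C _ r_connected _] [loopless simple ge4 conn] _].
have edges_ge3 := three_edges_at_ends rK r02C rNfix loopless simple ge4 conn.
have [colE | colE] := autU_colour_swap rK r02C hg r_connected edges_ge3.
  by left; split=> // v; rewrite colE.
by right; split=> // v; rewrite colE => ->.
Qed.
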